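(* Let $f$ be a periodic traveling wave of speed $c$ ($c^2\neq 1$). For $\beta\in\mathbb{R}$, the imaginary number $\lambda=i\beta$ lies in $\sigma(\mathrm{P})$ if and only if it lies in $\sigma(\mathrm{Q})$.
   Context: A traveling wave of speed $c$ ($c^2\neq1$) is a real solution $f$ of $(c^2-1)f''+\sin f=0$, with energy $E$ given by $\tfrac12(c^2-1)(f')^2+1-\cos f=E$; periodic traveling waves are librational ($0<E<2$) or rotational ($E<0$ if $c^2<1$, $E>2$ if $c^2>1$). Let $\gamma=1/(c^2-1)$. $\sigma(\mathrm{P})$ is the set of $\lambda\in\mathbb{C}$ for which $p''-2c\gamma\lambda p'+\gamma(\lambda^2+\cos f(z))p=0$ has a nontrivial solution bounded on $\mathbb{R}$. $\sigma(\mathrm{Q})$ is the set of $\lambda\in\mathbb{C}$ for which $q''+\gamma\cos(f(z))q=\mu q$ with $\mu=\gamma^2\lambda^2$ has a nontrivial solution bounded on $\mathbb{R}$. *)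

From Stdlib Require Import Reals.
From Coquelicot Require Import Coquelicot.
Open Scope R_scope.

Definition gam (c : R) : R := / (c ^ 2 - 1).

Definition tw_sol (c : R) (f f1 f2 : R -> R) : Prop :=
  (forall z, is_derive f z (f1 z)) /\
  (forall z, is_derive f1 z (f2 z)) /\
  (forall z, (c ^ 2 - 1) * f2 z + sin (f z) = 0).

Definition traveling_wave (c : R) (f : R -> R) : Prop :=
  exists f1 f2 : R -> R, tw_sol c f f1 f2.

Definition has_energy (c : R) (f : R -> R) (E : R) : Prop :=
  exists f1 f2 : R -> R, tw_sol c f f1 f2 /\
    forall z, / 2 * (c ^ 2 - 1) * (f1 z) ^ 2 + 1 - cos (f z) = E.

Definition librational (c : R) (f : R -> R) : Prop :=
  exists E, has_energy c f E /\ 0 < E < 2.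

Definition rotational (c : R) (f : R -> R) : Prop :=
  exists E, has_energy c f E /\
    ((c ^ 2 < 1 /\ E < 0) \/ (1 < c ^ 2 /\ 2 < E)).

Definition periodic_tw (c : R) (f : R -> R) : Prop :=
  c ^ 2 <> 1 /\ traveling_wave c f /\ (librational c f \/ rotational c f).

Definition bounded_C (p : R -> C) : Prop := exists M : R, forall z, Cmod (p z) <= M.

Definition in_sigma_P (c : R) (f : R -> R) (l : C) : Prop :=
  exists p p1 p2 : R -> C,
    (forall z, is_derive p z (p1 z)) /\
    (forall z, is_derive p1 z (p2 z)) /\
    (forall z, (p2 z - RtoC (2 * c * gam c) * l * p1 z
                + RtoC (gam c) * (l * l + RtoC (cos (f z))) * p z)%C = 0%C) /\
    bounded_C p /\ (exists z, p z <> 0%C).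

(* sigma(Q): q'' + gamma cos f q = mu q, mu = gamma^2 lambda^2,
   has a nontrivial solution bounded on R *)
Definition in_sigma_Q (c : R) (f : R -> R) (l : C) : Prop :=
  exists q q1 q2 : R -> C,
    (forall z, is_derive q z (q1 z)) /\
    (forall z, is_derive q1 z (q2 z)) /\
    (forall z, (q2 z + RtoC (gam c * cos (f z)) * q z)%C
               = (RtoC (gam c ^ 2) * (l * l) * q z)%C) /\
    bounded_C q /\ (exists z, q z <> 0%C).

(** Multiplying by the unimodular factor [e^(i k z)] is harmless for the
    spectral problem: it preserves boundedness and nontriviality, and it maps
    solutions of [p'' + A p' + B p = 0] to solutions of
    [p'' + (A - 2 i k) p' + (B - k^2 - i k A) p = 0].  The choice
    [k = c gamma beta] removes the first-order term of the equation of
    [sigma(P)] at [lambda = i beta] and turns it into the equation of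
    [sigma(Q)]; [k = - c gamma beta] goes back. *)

From Stdlib Require Import Reals Lra.
From Coquelicot Require Import Coquelicot.
Open Scope R_scope.

Lemma is_derive_Re (p : R -> C) x l :
  is_derive p x l -> is_derive (fun t => Re (p t)) x (Re l).
Proof.
  intros Hp.
  exact (filterdiff_comp' p fst x _ _ Hp (filterdiff_linear _ is_linear_fst)).
Qed.

Lemma is_derive_Im (p : R -> C) x l :
  is_derive p x l -> is_derive (fun t => Im (p t)) x (Im l).
Proof.
  intros Hp.
  exact (filterdiff_comp' p snd x _ _ Hp (filterdiff_linear _ is_linear_snd)).
Qed.

Lemma is_derive_C_of_parts (u v : R -> R) x a b :
  is_derive u x a -> is_derive v x b ->
  is_derive (fun t => (u t, v t) : C) x ((a, b) : C).
Proof.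
  intros Hu Hv.
  (* [(u, v) = u *: (1, 0) + v *: (0, 1)] in the real normed space [R * R]. *)
  assert (H := is_derive_plus
    (V := prod_NormedModule R_AbsRing R_NormedModule R_NormedModule) _ _ x _ _
    (is_derive_scal_l u x a ((1, 0) : R * R) Hu)
    (is_derive_scal_l v x b ((0, 1) : R * R) Hv)).
  cbn in H; unfold plus, scal, mult in H; cbn in H; unfold mult in H; cbn in H.
  replace ((a, b) : C) with (a * 1 + b * 0, a * 0 + b * 1)
    by (apply injective_projections; cbn; ring).
  eapply is_derive_ext; [|exact H].
  intros t; apply injective_projections; cbn; ring.
Qed.

Lemma is_derive_Cmult (p q : R -> C) x a b :
  is_derive p x a -> is_derive q x b ->
  is_derive (fun t => p t * q t)%C x (a * q x + p x * b)%C.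
Proof.
  intros Hp Hq.
  assert (Hmult := fun u v du dv (Hu : is_derive u x du) (Hv : is_derive v x dv) =>
    is_derive_mult u v x du dv Hu Hv (fun _ _ => Rmult_comm _ _)).
  pose proof (is_derive_Re _ _ _ Hp) as Hp1; pose proof (is_derive_Im _ _ _ Hp) as Hp2.
  pose proof (is_derive_Re _ _ _ Hq) as Hq1; pose proof (is_derive_Im _ _ _ Hq) as Hq2.
  assert (H := is_derive_C_of_parts _ _ x _ _
    (is_derive_minus _ _ x _ _ (Hmult _ _ _ _ Hp1 Hq1) (Hmult _ _ _ _ Hp2 Hq2))
    (is_derive_plus _ _ x _ _ (Hmult _ _ _ _ Hp1 Hq2) (Hmult _ _ _ _ Hp2 Hq1))).
  unfold minus, plus, opp, mult in H; cbn in H.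
  replace (a * q x + p x * b)%C with
    ((Re a * Re (q x) + Re (p x) * Re b + - (Im a * Im (q x) + Im (p x) * Im b),
      Re a * Im (q x) + Re (p x) * Im b + (Im a * Re (q x) + Im (p x) * Re b)) : C)
    by (destruct a, b, (p x), (q x); apply injective_projections; cbn; ring).
  eapply is_derive_ext; [|exact H].
  intros t; cbn; destruct (p t), (q t); apply injective_projections; cbn; ring.
Qed.

Definition phase (k t : R) : C := (cos (k * t), sin (k * t)).

Lemma is_derive_phase k t : is_derive (phase k) t (Ci * k * phase k t)%C.
Proof.
  replace (Ci * k * phase k t)%C with ((- sin (k * t) * k, cos (k * t) * k) : C)
    by (apply injective_projections; cbn; ring).
  apply is_derive_C_of_parts; auto_derive; auto; ring.
Qed.

Lemma Cmod_phase k t : Cmod (phase k t) = 1.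
Proof.
  unfold Cmod, phase; cbn [fst snd].
  replace (cos (k * t) ^ 2 + sin (k * t) ^ 2) with 1
    by (rewrite <- (sin2_cos2 (k * t)); unfold Rsqr; ring).
  exact sqrt_1.
Qed.

Lemma phase_neq0 k t : phase k t <> 0%C.
Proof.
  intros H0; assert (Hmod := Cmod_phase k t).
  rewrite H0, Cmod_0 in Hmod; lra.
Qed.

Lemma is_derive_phase_mul k (q : R -> C) z dq :
  is_derive q z dq ->
  is_derive (fun t => phase k t * q t)%C z (phase k z * (dq + Ci * k * q z))%C.
Proof.
  intros Hq.
  replace (phase k z * (dq + Ci * k * q z))%C
    with (Ci * k * phase k z * q z + phase k z * dq)%C by ring.
  exact (is_derive_Cmult _ _ _ _ _ (is_derive_phase k z) Hq).
Qed.

Definition has_bounded_nontrivial_solution (A : C) (B : R -> C) : Prop :=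
  exists p p1 p2 : R -> C,
    (forall z, is_derive p z (p1 z)) /\
    (forall z, is_derive p1 z (p2 z)) /\
    (forall z, (p2 z + A * p1 z + B z * p z)%C = 0%C) /\
    bounded_C p /\ (exists z, p z <> 0%C).

Lemma has_bounded_nontrivial_solution_ext A B A' B' :
  A = A' -> (forall z, B z = B' z) ->
  has_bounded_nontrivial_solution A B -> has_bounded_nontrivial_solution A' B'.
Proof.
  intros <- HB (p & p1 & p2 & Hp1 & Hp2 & Hode & Hbnd & Hnz).
  exists p, p1, p2; split; [exact Hp1|split; [exact Hp2|split; [|split; assumption]]].
  intros z; rewrite <- HB; apply Hode.
Qed.

Lemma has_bounded_nontrivial_solution_gauge (k : R) A B :
  has_bounded_nontrivial_solution A B ->
  has_bounded_nontrivial_solution (A - 2 * (Ci * k))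
    (fun z => B z + Ci * k * (Ci * k) - Ci * k * A)%C.
Proof.
  intros (q & q1 & q2 & Hq1 & Hq2 & Hode & [M HM] & [z0 Hz0]).
  set (r := fun t => (q1 t + Ci * k * q t)%C).
  assert (Hr : forall z, is_derive r z (q2 z + Ci * k * q1 z)%C).
  { intros z.
    replace (Ci * k * q1 z)%C with (0 * q z + Ci * k * q1 z)%C by ring.
    exact (is_derive_plus _ _ _ _ _ (Hq2 z)
             (is_derive_Cmult _ _ _ _ _ (is_derive_const _ _) (Hq1 z))). }
  exists (fun t => phase k t * q t)%C, (fun t => phase k t * r t)%C,
    (fun t => phase k t * (q2 t + Ci * k * q1 t + Ci * k * r t))%C.
  split; [|split; [|split; [|split]]].
  - intros z; exact (is_derive_phase_mul k q z _ (Hq1 z)).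
  - intros z; exact (is_derive_phase_mul k r z _ (Hr z)).
  - intros z; unfold r.
    transitivity (phase k z * (q2 z + A * q1 z + B z * q z))%C; [ring|].
    rewrite Hode; ring.
  - exists M; intros z.
    rewrite Cmod_mult, Cmod_phase, Rmult_1_l; apply HM.
  - exists z0; exact (Cmult_neq_0 _ _ (phase_neq0 k z0) Hz0).
Qed.

Lemma in_sigma_P_iff c f l :
  in_sigma_P c f l <->
  has_bounded_nontrivial_solution (- RtoC (2 * c * gam c) * l)
    (fun z => RtoC (gam c) * (l * l + RtoC (cos (f z))))%C.
Proof.
  split; intros (p & p1 & p2 & Hp1 & Hp2 & Hode & Hbnd & Hnz);
    exists p, p1, p2; (split; [exact Hp1|split; [exact Hp2|split; [|split; assumption]]]);
    intros z; rewrite <- (Hode z); ring.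
Qed.

Lemma in_sigma_Q_iff c f l :
  in_sigma_Q c f l <->
  has_bounded_nontrivial_solution 0
    (fun z => RtoC (gam c * cos (f z)) - RtoC (gam c ^ 2) * (l * l))%C.
Proof.
  split; intros (q & q1 & q2 & Hq1 & Hq2 & Hode & Hbnd & Hnz);
    exists q, q1, q2; (split; [exact Hq1|split; [exact Hq2|split; [|split; assumption]]]);
    intros z.
  - transitivity (q2 z + RtoC (gam c * cos (f z)) * q z
                  - RtoC (gam c ^ 2) * (l * l) * q z)%C; [ring|].
    rewrite Hode; ring.
  - transitivity (q2 z + 0 * q1 z + (RtoC (gam c * cos (f z))
                  - RtoC (gam c ^ 2) * (l * l)) * q z
                  + RtoC (gam c ^ 2) * (l * l) * q z)%C; [ring|].
    rewrite Hode; ring.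
Qed.

Theorem corollary3p2 (c : R) (f : R -> R) (beta : R) :
  c ^ 2 <> 1 -> periodic_tw c f ->
  (in_sigma_P c f (Ci * RtoC beta)%C <-> in_sigma_Q c f (Ci * RtoC beta)%C).
Proof.
  intros Hc _.
  assert (Hc' : c * c - 1 <> 0) by (cbn in Hc; lra).
  rewrite in_sigma_P_iff, in_sigma_Q_iff.
  split; intros Hsol.
  - apply (has_bounded_nontrivial_solution_gauge (- (c * gam c * beta))) in Hsol.
    revert Hsol; apply has_bounded_nontrivial_solution_ext;
      [|intros z]; apply injective_projections; cbn; unfold gam; field; cbn; lra.
  - apply (has_bounded_nontrivial_solution_gauge (c * gam c * beta)) in Hsol.
    revert Hsol; apply has_bounded_nontrivial_solution_ext;
      [|intros z]; apply injective_projections; cbn; unfold gam; field; cbn; lra.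
Qed.
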